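(* Let $k$ be a field, $V$ a $k$-vector space, $\varphi\in\operatorname{End}_k(V)$ a finite potent endomorphism with AST-decomposition $V=W_\varphi\oplus U_\varphi$ and core-nilpotent decomposition $\varphi=\varphi_1+\varphi_2$. If $\psi\in\operatorname{End}_k(V)$ is a G-Drazin inverse of $\varphi$, then $\psi=\varphi^D+\psi_2$, where $\varphi^D$ is the Drazin inverse of $\varphi$ and $\psi_2\in\operatorname{End}_k(V)$ is the unique linear map with $\psi_2(v)=0$ for $v\in W_\varphi$ and $\psi_2(v)=\psi(v)$ for $v\in U_\varphi$; moreover $\psi_2$ is a G-Drazin inverse of $\varphi_2$.
   Context: An endomorphism $\varphi$ of a $k$-vector space $V$ is finite potent if $\varphi^n(V)$ is finite dimensional for some $n$. For such $\varphi$, the AST-decomposition is $V=U_\varphi\oplus W_\varphi$ where $U_\varphi=\{v\in V: \varphi^m(v)=0 \text{ for some } m\}$ and $W_\varphi=\{v\in V: p(\varphi)(v)=0 \text{ for some } p(x)\in k[x] \text{ coprime to } x\}$; both are $\varphi$-invariant, $\varphi|_{U_\varphi}$ is nilpotent, $W_\varphi$ is finite dimensional and $\varphi|_{W_\varphi}$ is an automorphism. The index $i(\varphi)$ is the nilpotency order of $\varphi|_{U_\varphi}$. The Drazin inverse $\varphi^D$ is the linear map equal to $(\varphi|_{W_\varphi})^{-1}$ on $W_\varphi$ and to $0$ on $U_\varphi$. The core-nilpotent decomposition is $\varphi=\varphi_1+\varphi_2$ with $\varphi_1=\varphi\circ\varphi^D\circ\varphi$ (equal to $\varphi$ on $W_\varphi$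 and $0$ on $U_\varphi$) and $\varphi_2=\varphi-\varphi_1$ (equal to $0$ on $W_\varphi$ and $\varphi$ on $U_\varphi$). For a finite potent $\theta$ with index $s=i(\theta)$, an endomorphism $\psi$ is a G-Drazin inverse of $\theta$ if $\theta\circ\psi\circ\theta=\theta$ and $\psi\circ\theta^{s}=\theta^{s}\circ\psi$. *)

From HB Require Import structures.
From mathcomp Require Import all_boot all_order all_algebra.
Set Implicit Arguments. Unset Strict Implicit. Unset Printing Implicit Defensive.
Import GRing.Theory.
Local Open Scope ring_scope.

Section FinitePotent.
Variables (k : fieldType) (V : lmodType k).

(* Endomorphisms are plain functions V -> V together with the hypothesis
   [linear f]; the n-th power phi^n is [iter n phi]. *)
Definition lin_endo (f : V -> V) : Prop := linear f.

Definition findim (S : V -> Prop) : Prop :=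
  exists s : seq V, forall v, S v ->
    exists c : nat -> k, v = \sum_(i < size s) c i *: s`_i.

Definition image_pow (phi : V -> V) (n : nat) : V -> Prop :=
  fun v => exists x, v = iter n phi x.

Definition finite_potent (phi : V -> V) : Prop :=
  exists n, findim (image_pow phi n).

Definition poly_app (p : {poly k}) (phi : V -> V) (v : V) : V :=
  \sum_(i < size p) p`_i *: iter i phi v.

Definition U_ (phi : V -> V) : V -> Prop :=
  fun v => exists m, iter m phi v = 0.

Definition W_ (phi : V -> V) : V -> Prop :=
  fun v => exists p : {poly k}, coprimep p 'X /\ poly_app p phi v = 0.

Definition is_index (phi : V -> V) (s : nat) : Prop :=
  (forall u, U_ phi u -> iter s phi u = 0) /\
  (forall m, (forall u, U_ phi u -> iter m phi u = 0) -> (s <= m)%N).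

Definition is_drazin_inv (phi delta : V -> V) : Prop :=
  linear delta /\
  (forall w, W_ phi w -> W_ phi (delta w) /\ phi (delta w) = w) /\
  (forall u, U_ phi u -> delta u = 0).

Definition core_part (phi phiD : V -> V) : V -> V :=
  fun v => phi (phiD (phi v)).
Definition nil_part (phi phiD : V -> V) : V -> V :=
  fun v => phi v - core_part phi phiD v.

Definition gdrazin (theta psi : V -> V) : Prop :=
  exists s, is_index theta s /\
    (forall v, theta (psi (theta v)) = theta v) /\
    (forall v, psi (iter s theta v) = iter s theta (psi v)).

End FinitePotent.

(* Since phi^n(V) is finite dimensional, every vector v is killed by some nonzero
   r(phi); writing r = q X^m with q coprime to X, a Bezout identity a q + b X^m = 1
   splits v into (b X^m)(phi) v in W and (a q)(phi) v in U, and the same coprimality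
   makes the sum direct.  A G-Drazin inverse psi agrees with phi^D on W: with
   s = i(phi), W lies in phi^s(V), psi commutes with phi^s and phi^s kills U, so psi
   maps W into W, where phi psi = phi phi^D and phi is injective.  Hence
   psi2 = psi - phi^D.  The nilpotent part phi2 is phi on U and 0 on W, so
   phi2 psi2 phi2 = phi2 follows by comparing the components of phi psi phi = phi,
   and the commutation condition is trivial because phi2 is nilpotent. *)

From mathcomp Require Import all_boot all_algebra.
From Stdlib Require Import Classical FunctionalExtensionality Wf_nat.
Set Implicit Arguments. Unset Strict Implicit. Unset Printing Implicit Defensive.
Import GRing.Theory.
Local Open Scope ring_scope.

Section LinearFun.
Variable R : pzRingType.

Section Basics.
Variables (U W : lmodType R) (f : U -> W).
Hypothesis f_lin : linear f.

Lemma linD x y : f (x + y) = f x + f y.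
Proof. by have := f_lin 1 x y; rewrite !scale1r. Qed.

Lemma lin0 : f 0 = 0.
Proof. by apply: (addrI (f 0)); rewrite -linD !addr0. Qed.

Lemma linZ a x : f (a *: x) = a *: f x.
Proof. by have := f_lin a x 0; rewrite !addr0 lin0 addr0. Qed.

Lemma linB x y : f (x - y) = f x - f y.
Proof. by rewrite linD -scaleN1r linZ scaleN1r. Qed.

Lemma lin_sum I (r : seq I) (P : pred I) (F : I -> U) :
  f (\sum_(i <- r | P i) F i) = \sum_(i <- r | P i) f (F i).
Proof. exact: (big_morph f linD lin0). Qed.

End Basics.

Lemma lin_sub (U W : lmodType R) (f g : U -> W) :
  linear f -> linear g -> linear (fun v => f v - g v).
Proof. by move=> f_lin g_lin a u v; rewrite f_lin g_lin scalerBr opprD addrACA. Qed.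

Lemma lin_comp (U V W : lmodType R) (f : V -> W) (g : U -> V) :
  linear f -> linear g -> linear (f \o g).
Proof. by move=> f_lin g_lin a u v /=; rewrite g_lin f_lin. Qed.

Lemma lin_iter (V : lmodType R) (f : V -> V) n :
  linear f -> linear (iter n f).
Proof. by move=> f_lin; elim: n => [|n IHn] a u v //=; rewrite IHn f_lin. Qed.

End LinearFun.

Lemma index_of_nilpotent (k : fieldType) (V : lmodType k) (f : V -> V) n :
  (forall v, iter n f v = 0) -> exists t, is_index f t.
Proof.
move=> f_nil.
have [t [[t_nil t_min] _]] := @dec_inh_nat_subset_has_unique_least_element
  (fun m => forall v, iter m f v = 0) (fun m => classic _) (ex_intro _ n f_nil).
exists t; split=> [v _ | m m_nil]; first exact: t_nil.
by apply/leP/t_min => v; apply: m_nil; exists n.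
Qed.

Section PolyAction.
Variables (k : fieldType) (V : lmodType k) (phi : V -> V).
Hypothesis phi_lin : lin_endo phi.
Implicit Types (p q : {poly k}) (v : V).

Lemma poly_app_widen p v N : (size p <= N)%N ->
  poly_app p phi v = \sum_(i < N) p`_i *: iter i phi v.
Proof.
move=> le_pN; rewrite /poly_app (big_ord_widen N (fun i => p`_i *: iter i phi v) le_pN).
rewrite big_mkcond; apply: eq_bigr => i _ /=.
by case: ltnP => // le_p_i; rewrite nth_default // scale0r.
Qed.

Lemma poly_app_lin p : lin_endo (poly_app p phi).
Proof.
move=> a u v; rewrite /poly_app scaler_sumr -big_split; apply: eq_bigr => i _ /=.
by rewrite (lin_iter i phi_lin) scalerDr !scalerA mulrC.
Qed.

Lemma poly_appD p q v : poly_app (p + q) phi v = poly_app p phi v + poly_app q phi v.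
Proof.
rewrite (poly_app_widen _ (size_polyD p q)) (poly_app_widen _ (leq_maxl (size p) (size q))).
rewrite (poly_app_widen _ (leq_maxr (size p) (size q))) -big_split.
by apply: eq_bigr => i _; rewrite coefD scalerDl.
Qed.

Lemma poly_appZ c p v : poly_app (c *: p) phi v = c *: poly_app p phi v.
Proof.
rewrite (poly_app_widen _ (size_scale_leq c p)) /poly_app scaler_sumr.
by apply: eq_bigr => i _; rewrite coefZ scalerA.
Qed.

Lemma poly_appC c v : poly_app c%:P phi v = c *: v.
Proof. by rewrite (poly_app_widen _ (size_polyC_leq1 c)) big_ord1 coefC. Qed.

Lemma poly_app1 v : poly_app 1 phi v = v.
Proof. by rewrite -polyC1 poly_appC scale1r. Qed.

Lemma poly_app_phi p v : poly_app p phi (phi v) = phi (poly_app p phi v).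
Proof.
rewrite /poly_app lin_sum //; apply: eq_bigr => i _.
by rewrite linZ // -iterSr -iterS.
Qed.

Lemma poly_appMX p v : poly_app (p * 'X) phi v = poly_app p phi (phi v).
Proof.
have le_pX : (size (p * 'X)%R <= (size p).+1)%N.
  by apply: leq_trans (size_polyMleq _ _) _; rewrite size_polyX addn2.
rewrite (poly_app_widen _ le_pX) big_ord_recl coefMX eqxx scale0r add0r.
by apply: eq_bigr => i _; rewrite coefMX /= -iterSr.
Qed.

Lemma poly_appM p q v : poly_app (p * q) phi v = poly_app p phi (poly_app q phi v).
Proof.
elim/poly_ind: p v => [|p c IHp] v; first by rewrite mul0r /poly_app size_poly0 !big_ord0.
rewrite mulrDl mulrAC !poly_appD !poly_appMX IHp -poly_app_phi.
by rewrite mul_polyC poly_appZ poly_appC.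
Qed.

Lemma poly_appXn n v : poly_app 'X^n phi v = iter n phi v.
Proof.
elim: n v => [|n IHn] v; first by rewrite expr0 poly_app1.
by rewrite exprSr poly_appMX IHn -iterSr.
Qed.

Lemma poly_app_coprime_eq0 p q v : coprimep p q ->
  poly_app p phi v = 0 -> poly_app q phi v = 0 -> v = 0.
Proof.
case/Bezout_eq1_coprimepP => [[a b] /= Bezout_ab] pv0 qv0.
rewrite -[v]poly_app1 -Bezout_ab poly_appD !poly_appM pv0 qv0.
by rewrite !(lin0 (poly_app_lin _)) addr0.
Qed.

Lemma U_phi u : U_ phi u -> U_ phi (phi u).
Proof. by case=> m um0; exists m; rewrite -iterSr iterS um0 lin0. Qed.

Lemma U_sub u1 u2 : U_ phi u1 -> U_ phi u2 -> U_ phi (u1 - u2).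
Proof.
case=> m1 u1m0 [m2 u2m0]; exists (m1 + m2)%N.
rewrite (linB (lin_iter _ phi_lin)) {1}addnC !iterD u1m0 u2m0.
by rewrite !(lin0 (lin_iter _ phi_lin)) subrr.
Qed.

Lemma U_iter n u : U_ phi u -> U_ phi (iter n phi u).
Proof. by move=> Uu; elim: n => //= n; apply: U_phi. Qed.

Lemma W_phi w : W_ phi w -> W_ phi (phi w).
Proof. by case=> p [p_cop pw0]; exists p; rewrite poly_app_phi pw0 lin0. Qed.

Lemma W_iter n w : W_ phi w -> W_ phi (iter n phi w).
Proof. by move=> Ww; elim: n => //= n; apply: W_phi. Qed.

Lemma W_sub w1 w2 : W_ phi w1 -> W_ phi w2 -> W_ phi (w1 - w2).
Proof.
case=> p [p_cop pw0] [q [q_cop qw0]]; exists (p * q).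
split; first by rewrite coprimepMl p_cop.
rewrite (linB (poly_app_lin _)) {1}mulrC !poly_appM pw0 qw0.
by rewrite !(lin0 (poly_app_lin _)) subrr.
Qed.

Lemma W_U_eq0 v : W_ phi v -> U_ phi v -> v = 0.
Proof.
case=> p [p_cop pv0] [m vm0].
by apply: (poly_app_coprime_eq0 (coprimep_expr m p_cop) pv0); rewrite poly_appXn.
Qed.

Lemma W_phi_inj w : W_ phi w -> phi w = 0 -> w = 0.
Proof. by move=> Ww phiw0; apply: W_U_eq0 => //; exists 1%N. Qed.

End PolyAction.

Lemma findim_dependent (k : fieldType) (V : lmodType k) (S : V -> Prop) :
  findim S -> exists n, forall x : 'I_n.+1 -> V, (forall i, S (x i)) ->
    exists2 a : 'rV[k]_n.+1, a != 0 & \sum_i a 0 i *: x i = 0.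
Proof.
case=> s span_s; exists (size s) => x Sx.
have [C x_def] := fin_all_exists (fun i => span_s _ (Sx i)).
pose A : 'M[k]_((size s).+1, size s) := \matrix_(i, j) C i j.
have A_dep : ~~ row_free A by rewrite /row_free ltn_eqF // ltnS rank_leq_col.
exists (nz_row (kermx A)); first by rewrite nz_row_eq0 kermx_eq0.
have /sub_kermxP := nz_row_sub (kermx A); set a := nz_row _ => aA0.
transitivity (\sum_(j < size s) (a *m A) 0 j *: s`_j); last first.
  by rewrite aA0 big1 // => j _; rewrite mxE scale0r.
under eq_bigr => i _ do rewrite x_def scaler_sumr.
rewrite exchange_big /=; apply: eq_bigr => j _.
by rewrite mxE scaler_suml; apply: eq_bigr => i _; rewrite mxE scalerA.
Qed.

Section Decomposition.
Variables (k : fieldType) (V : lmodType k) (phi : V -> V).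
Hypotheses (phi_lin : lin_endo phi) (phi_fp : finite_potent phi).

Lemma annihilating_poly v : exists2 r : {poly k}, r != 0 & poly_app r phi v = 0.
Proof.
have [m /findim_dependent [n dep]] := phi_fp.
have [a a_nz a_dep] :=
  dep (fun i => iter m phi (iter i phi v)) (fun i => ex_intro _ _ erefl).
pose q := \poly_(i < n.+1) a 0 (inord i).
have q_nz : q != 0.
  apply/eqP => q0; apply/(negP a_nz)/eqP/rowP => i.
  have := congr1 (fun p : {poly k} => p`_i) q0.
  by rewrite coef_poly ltn_ord inord_val coef0 !mxE.
exists ('X^m * q); first by rewrite mulf_neq0 // monic_neq0 // monicXn.
rewrite poly_appM // poly_appXn // (poly_app_widen _ _ (size_poly _ _)) -[RHS]a_dep.
rewrite (lin_sum (lin_iter m phi_lin)); apply: eq_bigr => i _.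
by rewrite (linZ (lin_iter m phi_lin)) coef_poly ltn_ord inord_val.
Qed.

Lemma W_U_decomp v : exists w u, [/\ W_ phi w, U_ phi u & v = w + u].
Proof.
have [r r_nz rv0] := annihilating_poly v.
have [m [q /implyP/(_ r_nz) q_nroot]] := multiplicity_XsubC r 0.
rewrite polyC0 subr0 => r_def.
have q_cop : coprimep q 'X by have := coprimep_XsubC q 0; rewrite polyC0 subr0 => ->.
have /Bezout_eq1_coprimepP [[a b] /= Bezout_ab] := coprimep_expr m q_cop.
exists (poly_app (b * 'X^m) phi v), (poly_app (a * q) phi v); split.
- exists q; split=> //.
  by rewrite -poly_appM // mulrCA -r_def poly_appM // rv0 (lin0 (poly_app_lin _ _)).
- exists m; rewrite -poly_appXn // -poly_appM // mulrCA (mulrC 'X^m) -r_def.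
  by rewrite poly_appM // rv0 (lin0 (poly_app_lin _ _)).
- by rewrite -poly_appD // addrC Bezout_ab poly_app1.
Qed.

Lemma eq_on_W_U (f g : V -> V) : lin_endo f -> lin_endo g ->
  (forall w, W_ phi w -> f w = g w) -> (forall u, U_ phi u -> f u = g u) -> f = g.
Proof.
move=> f_lin g_lin eqW eqU; apply: functional_extensionality => v.
have [w [u [Ww Uu ->]]] := W_U_decomp v.
by rewrite (linD f_lin) (linD g_lin) eqW // eqU.
Qed.

End Decomposition.

Section CoreNilpotent.
Variables (k : fieldType) (V : lmodType k) (phi phiD : V -> V).
Hypotheses (phi_lin : lin_endo phi) (phi_fp : finite_potent phi).
Hypothesis phiD_drazin : is_drazin_inv phi phiD.

Let phiD_lin : lin_endo phiD. Proof. by case: phiD_drazin. Qed.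
Let phiD_W w : W_ phi w -> W_ phi (phiD w) /\ phi (phiD w) = w.
Proof. by case: phiD_drazin => _ [phiD_W _]; apply: phiD_W. Qed.
Let phiD_U u : U_ phi u -> phiD u = 0.
Proof. by case: phiD_drazin => _ [_ phiD_U]; apply: phiD_U. Qed.

Local Notation phi2 := (nil_part phi phiD).

Lemma W_image_pow n w : W_ phi w -> exists2 y, W_ phi y & w = iter n phi y.
Proof.
move=> Ww; elim: n => [|n [y Wy ->]]; first by exists w.
by have [WDy phiDy] := phiD_W Wy; exists (phiD y); rewrite // iterSr phiDy.
Qed.

Lemma gdrazin_W psi w : gdrazin phi psi -> W_ phi w -> psi w = phiD w.
Proof.
case=> s [[s_nil _] [psi_inner psi_comm]] Ww.
have [y _ w_def] := W_image_pow s Ww.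
have [a [b [Wa Ub psiy]]] := W_U_decomp phi_lin phi_fp (psi y).
have W_psiw : W_ phi (psi w).
  rewrite w_def psi_comm psiy (linD (lin_iter s phi_lin)) (s_nil b Ub) addr0.
  exact: W_iter.
have [WDw phiDw] := phiD_W Ww.
have phi_psiw : phi (psi w) = phi (phiD w) by rewrite -{1}phiDw psi_inner.
apply/eqP; rewrite -subr_eq0; apply/eqP.
apply: (W_phi_inj phi_lin); first exact: (W_sub phi_lin).
by rewrite (linB phi_lin) phi_psiw subrr.
Qed.

Lemma nil_part_lin : lin_endo phi2.
Proof. exact: lin_sub phi_lin (lin_comp phi_lin (lin_comp phiD_lin phi_lin)). Qed.

Lemma nil_part_W w : W_ phi w -> phi2 w = 0.
Proof. by move=> Ww; rewrite /nil_part /core_part (phiD_W (W_phi phi_lin Ww)).2 subrr. Qed.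

Lemma nil_part_U u : U_ phi u -> phi2 u = phi u.
Proof.
by move=> Uu; rewrite /nil_part /core_part phiD_U ?(lin0 phi_lin) ?subr0 //; apply: U_phi.
Qed.

Lemma nil_part_decomp w u : W_ phi w -> U_ phi u -> phi2 (w + u) = phi u.
Proof. by move=> Ww Uu; rewrite (linD nil_part_lin) nil_part_W // nil_part_U // add0r. Qed.

Lemma iter_nil_part_U n u : U_ phi u -> iter n phi2 u = iter n phi u.
Proof.
by move=> Uu; elim: n => //= n ->; apply/nil_part_U/U_iter.
Qed.

Lemma nil_part_nilpotent s v : is_index phi s -> iter s.+1 phi2 v = 0.
Proof.
case=> s_nil _; have [w [u [Ww Uu ->]]] := W_U_decomp phi_lin phi_fp v.
rewrite iterSr nil_part_decomp // iter_nil_part_U; last exact: U_phi.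
by rewrite -iterSr iterS s_nil // (lin0 phi_lin).
Qed.

Lemma gdrazin_nil_part psi : lin_endo psi -> gdrazin phi psi ->
  gdrazin phi2 (fun v => psi v - phiD v).
Proof.
move=> psi_lin psi_gd; have [s [s_index [psi_inner _]]] := psi_gd.
(* i(phi2) = i(phi) fails when i(phi) = 0 and V <> 0, so take the least exponent. *)
have [t t_index] := index_of_nilpotent (fun v => nil_part_nilpotent v s_index).
have phi2_nil v : iter t phi2 v = 0.
  by apply: t_index.1; exists s.+1; apply: nil_part_nilpotent.
exists t; split=> //; split=> v; last first.
  by rewrite !phi2_nil (lin0 psi_lin) (lin0 phiD_lin) subr0.
have [w [u [Ww Uu ->]]] := W_U_decomp phi_lin phi_fp v.
rewrite (nil_part_decomp Ww Uu) phiD_U ?subr0; last exact: (U_phi phi_lin).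
have [a [b [Wa Ub psi_phiu]]] := W_U_decomp phi_lin phi_fp (psi (phi u)).
have phi_ab : phi a + phi b = phi u by rewrite -(linD phi_lin) -psi_phiu psi_inner.
have phia0 : phi a = 0.
  apply: (W_U_eq0 phi_lin); first exact: (W_phi phi_lin).
  by rewrite -[phi a](addrK (phi b)) phi_ab; apply: (U_sub phi_lin); apply: (U_phi phi_lin).
by rewrite psi_phiu nil_part_decomp // -phi_ab phia0 add0r.
Qed.

End CoreNilpotent.

Theorem corollary3p5 (k : fieldType) (V : lmodType k) (phi psi phiD : V -> V) :
  lin_endo phi -> finite_potent phi ->
  is_drazin_inv phi phiD ->
  lin_endo psi -> gdrazin phi psi ->
  exists psi2 : V -> V,
    [/\ lin_endo psi2,
        (forall w, W_ phi w -> psi2 w = 0) /\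
        (forall u, U_ phi u -> psi2 u = psi u),
        (forall psi2' : V -> V, lin_endo psi2' ->
           (forall w, W_ phi w -> psi2' w = 0) ->
           (forall u, U_ phi u -> psi2' u = psi u) ->
           psi2' = psi2),
        (forall v, psi v = phiD v + psi2 v)
      & gdrazin (nil_part phi phiD) psi2].
Proof.
move=> phi_lin phi_fp phiD_drazin psi_lin psi_gd.
have [phiD_lin [_ phiD_U]] := phiD_drazin.
pose psi2 v := psi v - phiD v.
have psi2_W w : W_ phi w -> psi2 w = 0.
  by move=> Ww; rewrite /psi2 (gdrazin_W phi_lin phi_fp phiD_drazin psi_gd Ww) subrr.
have psi2_U u : U_ phi u -> psi2 u = psi u by move=> Uu; rewrite /psi2 phiD_U ?subr0.
have psi2_lin : lin_endo psi2 by apply: lin_sub.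
exists psi2; split=> //.
- move=> psi2' psi2'_lin psi2'_W psi2'_U.
  apply: (eq_on_W_U phi_lin phi_fp) => // [w Ww | u Uu].
  + by rewrite psi2'_W ?psi2_W.
  + by rewrite psi2'_U ?psi2_U.
- by move=> v; rewrite /psi2 addrC subrK.
- exact: gdrazin_nil_part.
Qed.
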